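(* Let $w(t)$ be a stationary multi-state telegraph-like noise taking values in a finite set $\{w_1,\dots,w_M\}$ of real numbers, with transition-rate matrix $\Gamma$ (so that $\sum_j \Gamma_{jk}=0$ for every $k$) and stationary initial distribution $y(0)$ (a probability vector with $\Gamma y(0)=0$). Let $W=\mathrm{diag}(w_1,\dots,w_M)$. For a dynamical decoupling (DD) sequence of $N\ge 1$ ideal $\pi$ pulses applied at times $\alpha_1 t<\alpha_2 t<\dots<\alpha_N t$ in $(0,t)$, with $0<\alpha_1<\dots<\alpha_N<1$, set $\alpha_0=0$, $\alpha_{N+1}=1$, $a_n=\alpha_n-\alpha_{n-1}$ for $n=1,\dots,N+1$, and require the echo condition $a_1-a_2+a_3-\cdots+(-1)^N a_{N+1}=0$. The qubit coherence (decoherence function) is $$\langle x(t)\rangle=\sum_{j}\Big[e^{[\Gamma+(-1)^N iW]a_{N+1}t}\cdots e^{[\Gamma-iW]a_2 t}\,e^{[\Gamma+iW]a_1 t}\,y(0)\Big]_j .$$ Then, in the short-time limit $t\to 0$, among all DD sequences with the same number $N$ of pulses satisfying the echo condition, the Carr–Purcell–Meiboom–Gill (CPMG) sequence, i.e. $\alpha_n=\frac{2n-1}{2N}$ for $n=1,\dots,N$, is the global minimizer of the decoherence: the coefficient of the leading (third-order) term $t^3$ in the Taylor expansion of $1-\langle x(t)\rangle$ about $t=0$ has minimal absolute value at the CPMG timing.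
   Context: Physical setting: a qubit with Hamiltonian $H=S_z w(t)$ in a random classical field $w(t)$; $x=S_x+iS_y$ is the transverse polarization and $\langle x(t)\rangle$ its ensemble average. The telegraph-like noise jumps randomly among the values $w_j$ with probabilities $Y_j(t)$ obeying $\frac{d}{dt}Y_j=\sum_{j'}\Gamma_{jj'}Y_{j'}$. Ideal instantaneous $\pi$ pulses flip the spin between $+z$ and $-z$, equivalently flip the sign of the field, which yields the stated product-of-exponentials formula for $\langle x(t)\rangle$. *)

From mathcomp Require Import all_boot all_algebra complex.
From mathcomp Require Import reals.
Set Implicit Arguments. Unset Strict Implicit. Unset Printing Implicit Defensive.
Import GRing.Theory Num.Theory.
Local Open Scope ring_scope.

(* Formal power series in the variable t with coefficients in a ring A:
   k |-> coefficient of t^k. *)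
Definition fps (A : Type) := nat -> A.

Definition fps_mul (A : pzRingType) (f g : fps A) : fps A :=
  fun k => \sum_(i < k.+1) f i * g (k - i)%N.

Definition fps_one (A : pzRingType) : fps A := fun k => if k == 0%N then 1 else 0.

Definition mexp_series (C : fieldType) (m : nat) (B : 'M[C]_m) : fps 'M[C]_m :=
  fun k => ((k`!)%:R)^-1 *: (B ^+ k).

Section Decoherence.
Variables (R : realType) (M : nat).

Definition cplxM (A : 'M[R]_M) : 'M[R[i]]_M := map_mx (fun r => (r%:C)%C) A.
Definition cplxV (v : 'cV[R]_M) : 'cV[R[i]]_M := map_mx (fun r => (r%:C)%C) v.

Definition Wmat (w : 'I_M -> R) : 'M[R]_M := diag_mx (\row_j w j).

Definition interval (alpha : nat -> R) (n : nat) : R := alpha n - alpha n.-1.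

Definition seg_gen (Gamma : 'M[R]_M) (w : 'I_M -> R) (alpha : nat -> R) (n : nat)
  : 'M[R[i]]_M :=
  ((interval alpha n)%:C)%C *:
    (cplxM Gamma + ((-1) ^+ n.-1 * 'i%C) *: cplxM (Wmat w)).

Fixpoint prop_series (Gamma : 'M[R]_M) (w : 'I_M -> R) (alpha : nat -> R) (n : nat)
  : fps 'M[R[i]]_M :=
  match n with
  | 0 => fps_one _
  | n'.+1 => fps_mul (mexp_series (seg_gen Gamma w alpha n))
                     (prop_series Gamma w alpha n')
  end.

Definition coherence_series (Gamma : 'M[R]_M) (w : 'I_M -> R) (y0 : 'cV[R]_M)
  (N : nat) (alpha : nat -> R) : fps R[i] :=
  fun k => \sum_(j < M) ((prop_series Gamma w alpha N.+1 k) *m cplxV y0) j 0.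

Definition decoherence_series (Gamma : 'M[R]_M) (w : 'I_M -> R) (y0 : 'cV[R]_M)
  (N : nat) (alpha : nat -> R) : fps R[i] :=
  fun k => (if k == 0%N then 1 else 0) - coherence_series Gamma w y0 N alpha k.

End Decoherence.

Definition DD_timing (R : realType) (N : nat) (alpha : nat -> R) : Prop :=
  [/\ alpha 0%N = 0, alpha N.+1 = 1,
      (forall n, (n <= N)%N -> alpha n < alpha n.+1) &
      \sum_(1 <= n < N.+2) (-1) ^+ n.-1 * interval alpha n = 0].

Definition CPMG (R : realType) (N : nat) : nat -> R :=
  fun n => if n == 0%N then 0
           else if (n <= N)%N then ((2 * n - 1)%N)%:R / ((2 * N)%N)%:R else 1.

(* Transition-rate matrix (column convention dY/dt = Gamma Y):
   nonnegative off-diagonal rates, columns summing to zero. *)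
Definition rate_matrix (R : realType) (M : nat) (Gamma : 'M[R]_M) : Prop :=
  (forall j k : 'I_M, j != k -> 0 <= Gamma j k) /\
  (forall k : 'I_M, \sum_(j < M) Gamma j k = 0).

Definition stationary_distribution (R : realType) (M : nat) (Gamma : 'M[R]_M)
  (y0 : 'cV[R]_M) : Prop :=
  (forall j, 0 <= y0 j 0) /\ \sum_(j < M) y0 j 0 = 1 /\ Gamma *m y0 = 0.

Arguments DD_timing {R} N alpha.
Arguments CPMG R N n.

From Pilot Require Import Defs.
From mathcomp Require Import all_boot all_order all_algebra complex.
From mathcomp Require Import reals ring lra.
Set Implicit Arguments. Unset Strict Implicit. Unset Printing Implicit Defensive.
Import Order.TTheory GRing.Theory Num.Theory.
Local Open Scope ring_scope.

(* Since [Gamma y(0) = 0] and the row of ones annihilates [Gamma], expanding the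
   ordered product of exponentials to third order only ever produces the two vectors
   [Gamma W y(0)] and [W^2 y(0)], and their coefficients can be tracked interval by
   interval. With [F] the running integral of the +-1 switching function, the echo
   condition [F(1) = 0] kills the [W^3] term, and integration by parts turns the
   remaining coefficient into [Q = int_0^1 F^2], so the t^3 coefficient of
   [1 - <x(t)>] is [Q * (1^T W Gamma W y(0))]. Finally [Q >= 1/(12 N^2)]: an inner
   interval of length [a] contributes at least [a^3/12], which lies above the tangent
   line of [a^3/12] at [a = 1/N]; the two outer intervals contribute [a^3/3] each since
   [F] vanishes at [0] and [1]; and the CPMG timing attains the bound. *)

Lemma cube_ge_tangent (R : realFieldType) (x m : R) : 0 <= x -> 0 <= m ->
  3 * m ^+ 2 * x - 2 * m ^+ 3 <= x ^+ 3.
Proof.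
move=> x_ge0 m_ge0.
have : 0 <= (x - m) ^+ 2 * (x + 2 * m) by apply: mulr_ge0; [exact: sqr_ge0|lra].
nra.
Qed.

Section Phase.
Variables (R : realFieldType) (a : nat -> R).

(* The pulses sit at the partial sums of [a]; the switching function [s] is
   [(-1)^(k-1)] on the [k]-th interval and [phase] is its running integral [F],
   sampled at the pulse times. Over the first [n] intervals, [phase_area n] is
   [int F], [sign_phase_area n] is [int s(t) (int_0^t F)] and [phase_energy n] is
   [int F^2]; [energy_term k] is the exact integral of [F^2] over the [k]-th interval,
   on which [F] is linear. *)
Definition signed_interval (n : nat) : R := (-1) ^+ n.-1 * a n.

Definition phase (n : nat) : R := \sum_(1 <= k < n.+1) signed_interval k.

Definition phase_area (n : nat) : R :=
  \sum_(1 <= k < n.+1) a k * (phase k.-1 + signed_interval k / 2).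

Definition sign_phase_area (n : nat) : R := \sum_(1 <= k < n.+1)
  (signed_interval k * phase_area k.-1 + a k * signed_interval k * phase k.-1 / 2
   + a k * signed_interval k ^+ 2 / 6).

Definition energy_term (k : nat) : R :=
  a k * (phase k.-1 ^+ 2 + phase k.-1 * phase k + phase k ^+ 2) / 3.

Definition phase_energy (n : nat) : R := \sum_(1 <= k < n.+1) energy_term k.

Lemma phase0 : phase 0 = 0.
Proof. by rewrite /phase big_geq. Qed.

Lemma phaseS n : phase n.+1 = phase n + signed_interval n.+1.
Proof. by rewrite /phase big_nat_recr. Qed.

Lemma phase_areaS n :
  phase_area n.+1 = phase_area n + a n.+1 * (phase n + signed_interval n.+1 / 2).
Proof. by rewrite /phase_area big_nat_recr. Qed.

Lemma sign_phase_areaS n : sign_phase_area n.+1 = sign_phase_area n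
  + (signed_interval n.+1 * phase_area n + a n.+1 * signed_interval n.+1 * phase n / 2
     + a n.+1 * signed_interval n.+1 ^+ 2 / 6).
Proof. by rewrite /sign_phase_area big_nat_recr. Qed.

Lemma phase_energyS n : phase_energy n.+1 = phase_energy n + energy_term n.+1.
Proof. by rewrite /phase_energy big_nat_recr. Qed.

Lemma sqr_signed_interval k : signed_interval k ^+ 2 = a k ^+ 2.
Proof. by rewrite /signed_interval exprMn sqrr_sign mul1r. Qed.

(* Integration by parts: [int F' G = F G - int F G'] with [G' = F]. *)
Lemma sign_phase_area_add_energy n :
  sign_phase_area n + phase_energy n = phase n * phase_area n.
Proof.
elim: n => [|n IH]; first by rewrite /sign_phase_area /phase_energy !big_geq // phase0 mul0r addr0.
rewrite sign_phase_areaS phase_energyS /energy_term /= phaseS phase_areaS.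
by rewrite addrACA IH; field.
Qed.

Lemma energy_term_ge k : (0 < k)%N -> 0 <= a k -> a k ^+ 3 / 12 <= energy_term k.
Proof.
case: k => [//|k] _ ha; rewrite /energy_term /= phaseS.
have hb := sqr_signed_interval k.+1.
move: (phase k) (signed_interval k.+1) (a k.+1) ha hb => f b x hx hb.
have : 0 <= x * (f + b / 2) ^+ 2 by apply: mulr_ge0; [|exact: sqr_ge0].
nra.
Qed.

Lemma energy_term_phase0 k : (0 < k)%N -> phase k.-1 = 0 \/ phase k = 0 ->
  energy_term k = a k ^+ 3 / 3.
Proof.
case: k => [//|k] _ /= h; rewrite /energy_term /=.
have hb := sqr_signed_interval k.+1.
case: h => [h|h].
  by rewrite phaseS h add0r mul0r expr0n /= !add0r hb; ring.
have hf : phase k = - signed_interval k.+1 by move: h; rewrite phaseS; lra.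
by rewrite h hf mulr0 expr0n /= !addr0 sqrrN hb; ring.
Qed.

Lemma phase_energy_ge N : (0 < N)%N -> (forall k, (0 < k <= N.+1)%N -> 0 <= a k) ->
  \sum_(1 <= k < N.+2) a k = 1 -> phase N.+1 = 0 ->
  N%:R^-1 ^+ 2 / 12 <= phase_energy N.+1.
Proof.
move=> N_gt0 a_ge0 sum_a phaseN.
(* The outer intervals [x], [y] enter through [x^3 + y^3 >= (x + y)^3 / 4]. *)
set m : R := N%:R^-1.
have m_ge0 : 0 <= m by rewrite invr_ge0 ler0n.
have Nm : N%:R * m = 1 by rewrite mulfV // pnatr_eq0 -lt0n.
rewrite big_ltn // big_nat_recr //= in sum_a.
rewrite /phase_energy big_ltn // big_nat_recr //=.
have -> : energy_term 1 = a 1%N ^+ 3 / 3.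
  by apply: energy_term_phase0 => //; left; exact: phase0.
have -> : energy_term N.+1 = a N.+1 ^+ 3 / 3 by apply: energy_term_phase0 => //; right.
set amid := \sum_(2 <= k < N.+1) a k in sum_a.
have mid_ge : m ^+ 2 / 4 * amid - m ^+ 3 / 6 * (N%:R - 1)
              <= \sum_(2 <= k < N.+1) energy_term k.
  have -> : N%:R - 1 = \sum_(2 <= k < N.+1) (1 : R).
    by rewrite sumr_const_nat subSS subn1 -{1}(prednK N_gt0) -natr1 addrK.
  rewrite !mulr_sumr -sumrB; apply: ler_sum_nat => k /andP [k_gt1 kN].
  have ak_ge0 : 0 <= a k by apply: a_ge0; rewrite (ltn_trans _ k_gt1) // ltnW.
  apply: le_trans (energy_term_ge (ltnW k_gt1) ak_ge0).
  have := cube_ge_tangent ak_ge0 m_ge0; lra.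
have := a_ge0 1%N isT; have := a_ge0 N.+1 (leqnn _).
move: (a 1%N) (a N.+1) sum_a mid_ge => x y sum_a mid_ge x_ge0 y_ge0.
have m3N : m ^+ 3 * N%:R = m ^+ 2 by rewrite exprSr -mulrA [m * _]mulrC Nm mulr1.
have : 0 <= (x - y) ^+ 2 * (x + y) by apply: mulr_ge0; [exact: sqr_ge0|lra].
have : 0 <= (x + y - m) ^+ 2 * (x + y + 2 * m) by apply: mulr_ge0; [exact: sqr_ge0|lra].
nra.
Qed.

End Phase.

Section CPMG.
Variables (R : realType) (N : nat).
Hypothesis N_gt0 : (0 < N)%N.
Local Notation c := (CPMG R N).
Local Notation a := (Defs.interval c).
Local Notation m := (N%:R^-1 : R).

Let N_neq0 : (N%:R : R) != 0.
Proof. by rewrite pnatr_eq0 -lt0n. Qed.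

Lemma CPMG_inner k : (0 < k <= N)%N -> c k = (k%:R * 2 - 1) / (N%:R * 2).
Proof.
case/andP=> k_gt0 kN.
rewrite /CPMG (gtn_eqF k_gt0) kN natrB ?muln_gt0 // !natrM.
by rewrite [_ * k%:R]mulrC [_ * N%:R]mulrC.
Qed.

Lemma CPMG_last : c N.+1 = 1.
Proof. by rewrite /CPMG /= ltnn. Qed.

Lemma CPMG_interval1 : a 1 = m / 2.
Proof.
rewrite /Defs.interval CPMG_inner ?N_gt0 // subr0.
by field; exact: N_neq0.
Qed.

Lemma CPMG_interval_mid k : (1 < k <= N)%N -> a k = m.
Proof.
case: k => [//|k] /andP [k_gt0 kN].
rewrite /Defs.interval !CPMG_inner ?kN ?(ltnW kN) ?andbT //= -natr1.
by field; exact: N_neq0.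
Qed.

Lemma CPMG_interval_last : a N.+1 = m / 2.
Proof.
rewrite /Defs.interval CPMG_last /= CPMG_inner ?N_gt0 ?leqnn //.
by field; exact: N_neq0.
Qed.

Lemma CPMG_interval_gt0 k : (0 < k <= N.+1)%N -> 0 < a k.
Proof.
have m_gt0 : 0 < m by rewrite invr_gt0 ltr0n.
case/andP=> k_gt0; rewrite leq_eqVlt ltnS => /orP [/eqP ->|kN].
  by rewrite CPMG_interval_last divr_gt0.
case: (ltnP 1 k) => k1; first by rewrite CPMG_interval_mid ?k1.
have -> : k = 1%N by apply/eqP; rewrite eqn_leq k1.
by rewrite CPMG_interval1 divr_gt0.
Qed.

Lemma CPMG_phase k : (0 < k <= N)%N -> phase a k = (-1) ^+ k.-1 * (m / 2).
Proof.
elim: k => [//|[|k] IH] /andP [_ kN].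
  by rewrite phaseS phase0 add0r /signed_interval CPMG_interval1.
rewrite phaseS IH ?(ltnW kN) // /signed_interval CPMG_interval_mid ?kN //= exprS.
by move: ((-1) ^+ k : R) => s; field; exact: N_neq0.
Qed.

Lemma CPMG_echo : phase a N.+1 = 0.
Proof.
rewrite phaseS CPMG_phase ?N_gt0 ?leqnn // /signed_interval CPMG_interval_last /=.
by rewrite -[in (-1) ^+ N](prednK N_gt0) exprS mulN1r mulNr addrN.
Qed.

Lemma CPMG_phase_pred k : (1 < k <= N)%N -> phase a k.-1 = - phase a k.
Proof.
case: k => [|[|k]] //= kN.
by rewrite !CPMG_phase ?(ltnW kN) ?kN //= exprS mulN1r mulNr opprK.
Qed.

Lemma CPMG_phase_sqr k : (0 < k <= N)%N -> phase a k ^+ 2 = (m / 2) ^+ 2.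
Proof. by move=> kN; rewrite CPMG_phase // exprMn sqrr_sign mul1r. Qed.

Lemma CPMG_phase_energy : phase_energy a N.+1 = m ^+ 2 / 12.
Proof.
rewrite /phase_energy big_ltn // big_nat_recr //=.
have -> : energy_term a 1 = a 1%N ^+ 3 / 3.
  by apply: energy_term_phase0 => //; left; exact: phase0.
have -> : energy_term a N.+1 = a N.+1 ^+ 3 / 3.
  by apply: energy_term_phase0 => //; right; exact: CPMG_echo.
rewrite (eq_big_nat _ _ (F2 := fun _ => m ^+ 3 / 12)); last first.
  move=> k /andP [k_gt1 kN]; have k_gt0 := ltnW k_gt1.
  rewrite /energy_term CPMG_interval_mid ?k_gt1 // CPMG_phase_pred ?k_gt1 //.
  by rewrite sqrrN mulNr -expr2 CPMG_phase_sqr ?k_gt0 //; field; exact: N_neq0.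
rewrite sumr_const_nat subSS subn1 CPMG_interval1 CPMG_interval_last.
by rewrite -[_ *+ N.-1]mulr_natr -subn1 natrB //; field; exact: N_neq0.
Qed.

Lemma CPMG_DD_timing : DD_timing N c.
Proof.
split=> //; first exact: CPMG_last; last exact: CPMG_echo.
by move=> n nN; rewrite -subr_gt0; apply: CPMG_interval_gt0.
Qed.

End CPMG.

Section MexpSeries.
Variables (C : fieldType) (m : nat) (A : 'M[C]_m).

Lemma mexp_series0 : mexp_series A 0%N = 1.
Proof. by rewrite /mexp_series fact0 invr1 scale1r expr0. Qed.

Lemma mexp_series1 : mexp_series A 1%N = A.
Proof. by rewrite /mexp_series factS fact0 muln1 invr1 scale1r expr1. Qed.

Lemma mexp_series2 : mexp_series A 2%N = 2^-1 *: (A * A).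
Proof. by rewrite /mexp_series expr2. Qed.

Lemma mexp_series3 : mexp_series A 3%N = 6^-1 *: (A * (A * A)).
Proof. by rewrite /mexp_series -expr2 -exprS. Qed.

End MexpSeries.

Lemma fps_oneS (A : pzRingType) k : fps_one A k.+1 = 0.
Proof. by []. Qed.

Section FpsMul.
Variables (A : pzRingType) (f g : fps A).

Lemma fps_mul0 : fps_mul f g 0%N = f 0%N * g 0%N.
Proof. by rewrite /fps_mul big_ord1. Qed.

Lemma fps_mul1 : fps_mul f g 1%N = f 0%N * g 1%N + f 1%N * g 0%N.
Proof. by rewrite /fps_mul !big_ord_recr big_ord0 /= add0r. Qed.

Lemma fps_mul2 : fps_mul f g 2%N = f 0%N * g 2%N + f 1%N * g 1%N + f 2%N * g 0%N.
Proof. by rewrite /fps_mul !big_ord_recr big_ord0 /= add0r. Qed.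

Lemma fps_mul3 :
  fps_mul f g 3%N = f 0%N * g 3%N + f 1%N * g 2%N + f 2%N * g 1%N + f 3%N * g 0%N.
Proof. by rewrite /fps_mul !big_ord_recr big_ord0 /= add0r. Qed.

End FpsMul.

Section LinComb2.
Variables (K : pzRingType) (V : lmodType K).

Definition lincomb2 (p q : V) (x y : K) : V := x *: p + y *: q.

Lemma lincomb2D p q x y x' y' :
  lincomb2 p q x y + lincomb2 p q x' y' = lincomb2 p q (x + x') (y + y').
Proof. by rewrite /lincomb2 !scalerDl addrACA. Qed.

Lemma lincomb2Z p q c x y : c *: lincomb2 p q x y = lincomb2 p q (c * x) (c * y).
Proof. by rewrite /lincomb2 scalerDr !scalerA. Qed.

End LinComb2.

Lemma mulmx_lincomb2 (K : comPzRingType) m n p (A : 'M[K]_(m, n)) (X Y : 'M[K]_(n, p)) x y :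
  A *m lincomb2 X Y x y = lincomb2 (A *m X) (A *m Y) x y.
Proof. by rewrite /lincomb2 mulmxDr -!scalemxAr. Qed.

Lemma mul_i_mul_i (R : rcfType) (x z : R[i]) : 'i%C * x * ('i%C * z) = - (x * z).
Proof. by rewrite mulrACA -expr2 sqr_i mulN1r. Qed.

Section PropagatorSeries.
Variables (R : realType) (M : nat) (Gamma : 'M[R]_M) (w : 'I_M -> R) (alpha : nat -> R).
Local Notation C := R[i].
Local Notation "x %:C" := (real_complex R x).
Local Notation a := (Defs.interval alpha).
Local Notation b := (signed_interval a).
Local Notation B := (seg_gen Gamma w alpha).
Local Notation P := (prop_series Gamma w alpha).

Lemma prop_seriesS n : P n.+1 = fps_mul (mexp_series (B n.+1)) (P n).
Proof. by []. Qed.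

Lemma prop_series0 n : P n 0%N = 1.
Proof. by elim: n => [|n IH] //; rewrite prop_seriesS fps_mul0 IH mexp_series0 mulr1. Qed.

Lemma prop_seriesS1 n : P n.+1 1%N = P n 1%N + B n.+1.
Proof.
rewrite prop_seriesS fps_mul1 mexp_series0 mexp_series1 prop_series0.
by rewrite mul1r mulr1.
Qed.

Lemma prop_seriesS2 n :
  P n.+1 2%N = P n 2%N + B n.+1 * P n 1%N + 2^-1 *: (B n.+1 * B n.+1).
Proof.
rewrite prop_seriesS fps_mul2 mexp_series0 mexp_series1 mexp_series2 prop_series0.
by rewrite mul1r mulr1.
Qed.

Lemma prop_seriesS3 n : P n.+1 3%N = P n 3%N + B n.+1 * P n 2%N
  + 2^-1 *: (B n.+1 * B n.+1) * P n 1%N + 6^-1 *: (B n.+1 * (B n.+1 * B n.+1)).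
Proof.
rewrite prop_seriesS fps_mul3 mexp_series0 mexp_series1 mexp_series2 mexp_series3.
by rewrite prop_series0 mul1r; congr (_ + _); exact: mulr1.
Qed.

Variable (y0 : 'cV[R]_M).
Local Notation G := (cplxM Gamma).
Local Notation W := (cplxM (Wmat w)).
Local Notation y := (cplxV y0).
Local Notation u := (const_mx 1 : 'rV[C]_M).
Local Notation GWy := (G *m (W *m y)).
Local Notation WWy := (W *m (W *m y)).

Hypothesis u_G : u *m G = 0.
Hypothesis G_y : G *m y = 0.

Lemma signed_intervalC n : (b n)%:C = (-1) ^+ n.-1 * (a n)%:C.
Proof. by rewrite /signed_interval rmorphM rmorphXn rmorphN1. Qed.

Lemma ones_mul_seg_gen n : u *m B n = ('i%C * (b n)%:C) *: (u *m W).
Proof.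
rewrite /seg_gen -!scalemxAr mulmxDr -scalemxAr u_G add0r scalerA signed_intervalC.
by congr (_ *: _); ring.
Qed.

Lemma seg_gen_mul_y n : B n *m y = ('i%C * (b n)%:C) *: (W *m y).
Proof.
rewrite /seg_gen -!scalemxAl mulmxDl G_y -scalemxAl add0r scalerA signed_intervalC.
by congr (_ *: _); ring.
Qed.

Lemma seg_gen_mul_Wy n : B n *m (W *m y) = lincomb2 GWy WWy (a n)%:C ('i%C * (b n)%:C).
Proof.
rewrite /seg_gen -scalemxAl mulmxDl -scalemxAl scalerDr scalerA signed_intervalC.
by rewrite /lincomb2; congr (_ + _ *: _); ring.
Qed.

Lemma prop_series1_mul_y n : P n 1%N *m y = ('i%C * (phase a n)%:C) *: (W *m y).
Proof.
elim: n => [|n IH]; first by rewrite phase0 rmorph0 mulr0 scale0r mul0mx.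
by rewrite prop_seriesS1 mulmxDl IH seg_gen_mul_y -scalerDl phaseS rmorphD mulrDr.
Qed.

Lemma prop_series2_mul_y n :
  P n 2%N *m y = lincomb2 GWy WWy ('i%C * (phase_area a n)%:C) (- (phase a n ^+ 2 / 2)%:C).
Proof.
elim: n => [|n IH].
  rewrite /phase_area big_geq // phase0 expr0n /= !mul0r rmorph0 oppr0 mulr0.
  by rewrite /lincomb2 !scale0r addr0 mul0mx.
rewrite prop_seriesS2 -mulmxE !mulmxDl IH -mulmxA prop_series1_mul_y -scalemxAr.
rewrite seg_gen_mul_Wy lincomb2Z -scalemxAl -mulmxA seg_gen_mul_y -scalemxAr seg_gen_mul_Wy.
rewrite !lincomb2Z !lincomb2D phase_areaS phaseS.
move: (a n.+1) (b n.+1) (phase a n) (phase_area a n) => x s f g.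
rewrite !mul_i_mul_i; congr lincomb2;
  by rewrite !(rmorphD, rmorphM, rmorphXn, rmorphN, fmorphV, rmorph_nat); field.
Qed.

Lemma prop_series3_coef n : u *m (P n 3%N *m y) =
  lincomb2 (u *m W *m GWy) (u *m W *m WWy)
    (- (sign_phase_area a n)%:C) (- ('i%C * (phase a n ^+ 3 / 6)%:C)).
Proof.
elim: n => [|n IH].
  rewrite /sign_phase_area big_geq // phase0 expr0n /= !mul0r rmorph0 mulr0 oppr0.
  by rewrite fps_oneS mul0mx mulmx0 /lincomb2 !scale0r addr0.
rewrite prop_seriesS3 -mulmxE !mulmxDl !mulmxDr IH.
move: (ones_mul_seg_gen n.+1) (seg_gen_mul_Wy n.+1) (seg_gen_mul_y n.+1).
move: (prop_series1_mul_y n) (prop_series2_mul_y n).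
move: (P n 1%N) (P n 2%N) (B n.+1) => P1 P2 Bn P1y P2y uB BWy By.
have from_BP2 : u *m (Bn *m P2 *m y) =
   ('i%C * (b n.+1)%:C) *: lincomb2 (u *m W *m GWy) (u *m W *m WWy)
     ('i%C * (phase_area a n)%:C) (- (phase a n ^+ 2 / 2)%:C).
  by rewrite -mulmxA P2y mulmxA uB -scalemxAl mulmx_lincomb2.
have from_B2P1 : u *m (2^-1 *: (Bn *m Bn) *m P1 *m y) =
   2^-1 *: (('i%C * (phase a n)%:C) *: (('i%C * (b n.+1)%:C) *:
      lincomb2 (u *m W *m GWy) (u *m W *m WWy) (a n.+1)%:C ('i%C * (b n.+1)%:C))).
  rewrite -!scalemxAl -scalemxAr -(mulmxA _ P1) P1y -!scalemxAr -(mulmxA Bn).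
  by rewrite BWy (mulmxA u Bn) uB -scalemxAl mulmx_lincomb2.
have from_B3 : u *m (6^-1 *: (Bn *m (Bn *m Bn)) *m y) =
   6^-1 *: (('i%C * (b n.+1)%:C) *: (('i%C * (b n.+1)%:C) *:
      lincomb2 (u *m W *m GWy) (u *m W *m WWy) (a n.+1)%:C ('i%C * (b n.+1)%:C))).
  rewrite -!scalemxAl -scalemxAr -!(mulmxA Bn) By -!scalemxAr.
  by rewrite BWy (mulmxA u Bn) uB -scalemxAl mulmx_lincomb2.
rewrite from_BP2 from_B2P1 from_B3 sign_phase_areaS phaseS !scalerA 3!lincomb2Z !lincomb2D.
move: (a n.+1) (b n.+1) (phase a n) (phase_area a n) => x s f g.
congr lincomb2;
  by rewrite !(rmorphD, rmorphM, rmorphXn, rmorphN, fmorphV, rmorph_nat); field: (@sqr_i R).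
Qed.

End PropagatorSeries.

Lemma sum_col_mulmx (K : pzSemiRingType) m (X : 'cV[K]_m) :
  \sum_(j < m) X j 0 = ((const_mx 1 : 'rV[K]_m) *m X) 0 0.
Proof. by rewrite mxE; apply: eq_bigr => j _; rewrite mxE mul1r. Qed.

Section RealEmbedding.
Variables (R : realType) (M : nat).

Lemma cplxM_mulmx_cplxV (A : 'M[R]_M) (v : 'cV[R]_M) : cplxM A *m cplxV v = cplxV (A *m v).
Proof. by rewrite /cplxV (map_mxM (real_complex R)). Qed.

Lemma const1_mulmx_cplxM (A : 'M[R]_M) : (forall k, \sum_(j < M) A j k = 0) ->
  (const_mx 1 : 'rV_M) *m cplxM A = 0.
Proof.
move=> colsum0; apply/matrixP => i k; rewrite !mxE.
rewrite (eq_bigr (fun j => real_complex R (A j k))); last by move=> j _; rewrite !mxE mul1r.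
by rewrite -rmorph_sum colsum0 rmorph0.
Qed.

End RealEmbedding.

Lemma sum_interval (R : realType) (alpha : nat -> R) n :
  \sum_(1 <= k < n.+1) Defs.interval alpha k = alpha n - alpha 0%N.
Proof. by rewrite big_add1 /= telescope_sumr. Qed.

Section Decoherence3.
Variables (R : realType) (M : nat) (Gamma : 'M[R]_M) (w : 'I_M -> R) (y0 : 'cV[R]_M).
Local Notation G := (cplxM Gamma).
Local Notation W := (cplxM (Wmat w)).
Local Notation y := (cplxV y0).
Local Notation u := (const_mx 1 : 'rV[R[i]]_M).

Lemma decoherence_series3 N alpha : rate_matrix Gamma -> stationary_distribution Gamma y0 ->
  phase (Defs.interval alpha) N.+1 = 0 ->
  decoherence_series Gamma w y0 N alpha 3 =
  - ((phase_energy (Defs.interval alpha) N.+1)%:C%C * (u *m W *m (G *m (W *m y))) 0 0).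
Proof.
move=> [_ colsum0] [_ [_ Gy0]] echo.
have u_G := const1_mulmx_cplxM colsum0.
have G_y : G *m y = 0 by rewrite cplxM_mulmx_cplxV Gy0 /cplxV map_mx0.
rewrite /decoherence_series /coherence_series sum_col_mulmx sub0r.
rewrite (prop_series3_coef w alpha u_G G_y) echo expr0n /= mul0r rmorph0 mulr0 oppr0.
rewrite /lincomb2 scale0r addr0 mxE -rmorphN.
have := sign_phase_area_add_energy (Defs.interval alpha) N.+1.
by rewrite echo mul0r => /eqP; rewrite addr_eq0 => /eqP ->; rewrite opprK.
Qed.

End Decoherence3.

Unset Implicit Arguments.

Theorem theorem1 (R : realType) (M : nat) (Gamma : 'M[R]_M) (w : 'I_M -> R)
  (y0 : 'cV[R]_M) (N : nat) :
  (1 <= N)%N ->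
  rate_matrix Gamma ->
  stationary_distribution Gamma y0 ->
  DD_timing N (CPMG R N) /\
  (forall alpha : nat -> R, DD_timing N alpha ->
     `| decoherence_series Gamma w y0 N (CPMG R N) 3 |
       <= `| decoherence_series Gamma w y0 N alpha 3 |).
Proof.
move=> N_gt0 rateG statY.
split=> [|alpha [alpha0 alpha1 alpha_incr echo]]; first exact: CPMG_DD_timing.
have a_ge0 k : (0 < k <= N.+1)%N -> 0 <= Defs.interval alpha k.
  by case: k => [//|k] /andP [_ kN]; rewrite subr_ge0 ltW ?alpha_incr.
have sum_a : \sum_(1 <= k < N.+2) Defs.interval alpha k = 1.
  by rewrite sum_interval alpha0 alpha1 subr0.
have energy_ge := phase_energy_ge N_gt0 a_ge0 sum_a echo.
rewrite !decoherence_series3 // ?CPMG_echo // !normrN !normrM CPMG_phase_energy //.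
apply: ler_wpM2r; first exact: normr_ge0.
have m_ge0 : 0 <= (N%:R : R)^-1 ^+ 2 / 12 by rewrite divr_ge0 ?sqr_ge0.
by rewrite !ger0_norm ?ler0c ?lecR // (le_trans m_ge0).
Qed.
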